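(* For $\ell\in\{0,\dots,N-1\}$ let $$\psi_\ell=\frac1{\sqrt{\|G_\ell\|_1}}\sum_{m\in\mathbb{Z}}G[mN+\ell]\,\phi_{mN+\ell}.$$ Then $\psi_\ell$ are eigenfunctions of $\mathcal{T}_K^N$ with $\mathcal{T}_K^N\psi_\ell=\|G_\ell\|_1\psi_\ell$; they satisfy $\|\psi_\ell\|_{\mathcal{H}}=1$ and $\|\psi_\ell\|=\frac{\|G_\ell\|}{\sqrt{\|G_\ell\|_1}}$; and they are orthogonal in $L^2_\mu$, i.e. $\langle\psi_\ell,\psi_k\rangle=0$ for $k\ne\ell$.
   Context: Let $\mathbb{T}=[-\pi,\pi)$, $j=\sqrt{-1}$, $\phi_k(x)=e^{jkx}$, $\mu$ uniform probability measure on $\mathbb{T}$, $\langle\cdot,\cdot\rangle$ and $\|\cdot\|$ the $L^2_\mu$ inner product and norm. Let $g$ be even, $M>0$, $K(x,x')=g(M((x-x')\bmod\mathbb{T}))$ positive definite with RKHS $\mathcal{H}$ (where $\theta\bmod\mathbb{T}:=((\theta+\pi)\bmod2\pi)-\pi$), $G[k]=\frac1{2\pi}\int_{-\pi}^{\pi}g(M\theta)e^{-jk\theta}d\theta\ge0$, $\sum_kG[k]<\infty$; the RKHS norm is $\|f\|_{\mathcal{H}}^2=\sum_k|\langle f,\phi_k\rangle|^2/G[k]$. For even $N$, grid points $x_i=\frac{2\pi}{N}i-\pi$, $i=0,\dots,N-1$, with invertible kernel matrix. $\mathcal{T}_K^Nf(x)=\frac1N\sum_{i=0}^{N-1}K(x,x_i)f(x_i)$.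 $\|G_\ell\|_1=\sum_m|G[mN+\ell]|$, $\|G_\ell\|^2=\sum_m|G[mN+\ell]|^2$. *)

From Stdlib Require Import Reals ZArith.
From Coquelicot Require Import Coquelicot.
From mathcomp Require Import all_boot all_algebra.
From mathcomp Require Import Rstruct.

Open Scope R_scope.

(* theta mod T := ((theta + pi) mod 2pi) - pi, a representative in [-pi, pi) *)
Definition modT (t : R) : R :=
  let u := t + PI in
  u - 2 * PI * IZR (Int_part (u / (2 * PI))) - PI.

Definition phi (k : Z) (x : R) : C := (cos (IZR k * x), sin (IZR k * x)).

Definition CInt (f : R -> C) (a b : R) : C :=
  (RInt (fun t => fst (f t)) a b, RInt (fun t => snd (f t)) a b).

(* bi-infinite sums over Z (symmetric partial sums; all sums used below are
   absolutely convergent under the hypotheses) *)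
Definition zsumR (a : Z -> R) : R :=
  a Z0 + Series (fun n => a (Z.of_nat (S n)) + a (Z.opp (Z.of_nat (S n)))).
Definition zsumC (a : Z -> C) : C :=
  (zsumR (fun k => fst (a k)), zsumR (fun k => snd (a k))).

Definition zsummable (a : Z -> R) : Prop :=
  ex_series (fun n => Rabs (a (Z.of_nat n))) /\
  ex_series (fun n => Rabs (a (Z.opp (Z.of_nat n)))).

(* L^2_mu inner product and norm, mu = uniform probability measure on T *)
Definition ip (f h : R -> C) : C :=
  Cmult (RtoC (/ (2 * PI))) (CInt (fun x => Cmult (f x) (Cconj (h x))) (- PI) PI).
Definition L2norm (f : R -> C) : R := sqrt (fst (ip f f)).

Definition Kern (g : R -> R) (M : R) (x x' : R) : R := g (M * modT (x - x')).

Definition Gcoef (g : R -> R) (M : R) (k : Z) : C :=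
  Cmult (RtoC (/ (2 * PI)))
        (CInt (fun t => Cmult (RtoC (g (M * t))) (phi (Z.opp k) t)) (- PI) PI).

Definition pos_def (K : R -> R -> R) : Prop :=
  forall (n : nat) (xs c : nat -> R),
    0 <= sum_f_R0 (fun i => sum_f_R0 (fun j => c i * c j * K (xs i) (xs j)) n) n.

Definition rkhs_norm (g : R -> R) (M : R) (f : R -> C) : R :=
  sqrt (zsumR (fun k => (Cmod (ip f (phi k)))^2 / fst (Gcoef g M k))).

Definition grid (N i : nat) : R := 2 * PI / INR N * INR i - PI.

Definition kmat (g : R -> R) (M : R) (N : nat) : 'M[R]_N :=
  (\matrix_(i < N, j < N) Kern g M (grid N i) (grid N j))%R.

Definition TKN (g : R -> R) (M : R) (N : nat) (f : R -> C) (x : R) : C :=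
  Cmult (RtoC (/ INR N))
    (\big[Cplus/RtoC 0]_(i < N) Cmult (RtoC (Kern g M x (grid N i))) (f (grid N i))).

Definition G1 (g : R -> R) (M : R) (N l : nat) : R :=
  zsumR (fun m => Cmod (Gcoef g M (Z.add (Z.mul m (Z.of_nat N)) (Z.of_nat l)))).
Definition G2 (g : R -> R) (M : R) (N l : nat) : R :=
  sqrt (zsumR (fun m => (Cmod (Gcoef g M (Z.add (Z.mul m (Z.of_nat N)) (Z.of_nat l))))^2)).

Definition psi (g : R -> R) (M : R) (N l : nat) (x : R) : C :=
  Cmult (RtoC (/ sqrt (G1 g M N l)))
    (zsumC (fun m => Cmult (Gcoef g M (Z.add (Z.mul m (Z.of_nat N)) (Z.of_nat l)))
                           (phi (Z.add (Z.mul m (Z.of_nat N)) (Z.of_nat l)) x))).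

(* The Fourier coefficients of psi_l are supported on the residue class l mod N.  On the
   grid x_i = 2 pi i / N - pi the exponentials phi_k with k in that class all coincide with
   phi_l (aliasing; this uses that N is even), while the discrete orthogonality relation
   sum_i phi_p(x_i) = N [N | p] filters the expansion K(x,x') = sum_k G[k] phi_k(x) conj(phi_k(x'))
   down to that class.  Hence T_K^N phi_l = sum_{k = l mod N} G[k] phi_k, which is
   sqrt(||G_l||_1) psi_l, and T_K^N psi_l = ||G_l||_1 psi_l.  The norms and inner products
   follow from Parseval's identity for absolutely summable coefficient families, obtained by
   termwise integration.  Invertibility of the kernel matrix gives ||G_l||_1 > 0: otherwise
   the matrix would annihilate the nonzero vector (phi_l(x_i))_i. *)

From Stdlib Require Import Reals ZArith Lia Lra FunctionalExtensionality.
From Coquelicot Require Import Coquelicot.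
Open Scope R_scope.

Lemma ex_series_Rle (a b : nat -> R) :
  (forall n, Rabs (a n) <= b n) -> ex_series b -> ex_series a.
Proof. exact (ex_series_le a b). Qed.

Lemma Series_zero : Series (fun _ => 0) = 0.
Proof.
  rewrite (Series_ext _ (fun _ => 0 * 0)) by (intros; ring).
  rewrite Series_scal_l. ring.
Qed.

Lemma Series_nonneg (u : nat -> R) : (forall n, 0 <= u n) -> ex_series u -> 0 <= Series u.
Proof.
  intros Hu Hex. rewrite <- Series_zero. apply Series_le; [intros n; split|]; auto with real.
Qed.

Lemma sum_f_R0_delta (u : nat -> R) n0 : (forall n, n <> n0 -> u n = 0) ->
  forall n, sum_f_R0 u n = if Nat.leb n0 n then u n0 else 0.
Proof.
  intros Hu n. induction n as [|n IH]; simpl.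
  - destruct n0; [reflexivity|]. apply Hu. lia.
  - rewrite IH.
    destruct (Nat.eq_dec (S n) n0) as [<-|Hne].
    + replace (Nat.leb (S n) n) with false by (symmetry; apply Nat.leb_gt; lia).
      rewrite Nat.leb_refl. ring.
    + rewrite (Hu _ Hne).
      destruct (Nat.leb_spec n0 n); destruct (Nat.leb_spec n0 (S n)); try lia; ring.
Qed.

Lemma is_series_delta (u : nat -> R) n0 :
  (forall n, n <> n0 -> u n = 0) -> is_series u (u n0).
Proof.
  intros Hu. change (is_lim_seq (sum_n u) (u n0)).
  apply is_lim_seq_ext_loc with (u := fun _ => u n0); [|apply is_lim_seq_const].
  exists n0. intros n Hn. rewrite sum_n_Reals, (sum_f_R0_delta u n0 Hu n).
  destruct (Nat.leb_spec n0 n); [reflexivity | lia].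
Qed.

Fixpoint psum (u : nat -> R) (n : nat) : R :=
  match n with O => 0 | S n => psum u n + u n end.

Lemma psum_ext (u v : nat -> R) n : (forall i, u i = v i) -> psum u n = psum v n.
Proof. intros H. induction n; simpl; congruence. Qed.

Lemma psum_plus (u v : nat -> R) n : psum (fun i => u i + v i) n = psum u n + psum v n.
Proof. induction n; simpl; [ring|]. rewrite IHn. ring. Qed.

Lemma psum_scal c (u : nat -> R) n : psum (fun i => c * u i) n = c * psum u n.
Proof. induction n; simpl; [ring|]. rewrite IHn. ring. Qed.

Lemma psum_const c n : psum (fun _ => c) n = INR n * c.
Proof. induction n; simpl psum; [simpl; ring|]. rewrite IHn, S_INR. ring. Qed.

Lemma psum_telescope (u : nat -> R) n : psum (fun i => u (S i) - u i) n = u n - u 0%nat.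
Proof. induction n; simpl; [ring|]. rewrite IHn. ring. Qed.

Lemma psum_add (u : nat -> R) m n : psum u (m + n) = psum u m + psum (fun i => u (m + i)%nat) n.
Proof. induction n; simpl; [rewrite Nat.add_0_r; ring|]. rewrite Nat.add_succ_r. simpl. rewrite IHn. ring. Qed.

Lemma psum_delta (u : nat -> R) n r :
  (r < n)%nat -> (forall i, (i < n)%nat -> i <> r -> u i = 0) -> psum u n = u r.
Proof.
  intros Hr Hu. induction n as [|n IH]; [lia|]. simpl.
  destruct (Nat.eq_dec n r) as [->|Hne].
  - assert (H0 : forall m, (m <= r)%nat -> psum u m = 0).
    { induction m; simpl; intros; [reflexivity|]. rewrite IHm, Hu by lia. ring. }
    rewrite H0 by lia. ring.
  - rewrite IH; [rewrite (Hu n) by lia; ring | lia | intros i Hi; apply Hu; lia].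
Qed.

Lemma sum_n_psum (u : nat -> R) n : sum_n u n = psum u (S n).
Proof. rewrite sum_n_Reals. induction n; simpl in *; [ring|]. rewrite IHn. reflexivity. Qed.

Lemma psum_progression (N r : nat) (d : nat -> R) K : (r < N)%nat ->
  (forall q s, (s < N)%nat -> s <> r -> d (q * N + s)%nat = 0) ->
  psum d (K * N) = psum (fun q => d (q * N + r)%nat) K.
Proof.
  intros Hr Hd. induction K as [|K IH]; [reflexivity|].
  replace (S K * N)%nat with (K * N + N)%nat by lia.
  rewrite psum_add, IH. simpl. f_equal.
  apply (psum_delta (fun i => d (K * N + i)%nat) N r Hr). intros s Hs Hsr. apply Hd; auto.
Qed.

Lemma is_series_progression (N r : nat) (d : nat -> R) (L : R) : (r < N)%nat ->
  (forall q s, (s < N)%nat -> s <> r -> d (q * N + s)%nat = 0) ->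
  is_series d L -> is_series (fun q => d (q * N + r)%nat) L.
Proof.
  intros Hr Hd HL. change (is_lim_seq (sum_n (fun q => d (q * N + r)%nat)) L).
  apply is_lim_seq_ext with (u := fun K => sum_n d (S K * N - 1)).
  - intros K. rewrite !sum_n_psum. replace (S (S K * N - 1)) with (S K * N)%nat by lia.
    apply psum_progression; auto.
  - apply (is_lim_seq_subseq (sum_n d) L (fun K => (S K * N - 1)%nat)); [|exact HL].
    intros P [N0 HP]. exists N0. intros K HK. apply HP. nia.
Qed.

(** * Absolutely summable families indexed by Z *)

Definition zpair (a : Z -> R) (n : nat) : R :=
  a (Z.of_nat (S n)) + a (- Z.of_nat (S n))%Z.

Lemma zsumR_zpair a : zsumR a = a 0%Z + Series (zpair a).
Proof. reflexivity. Qed.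

Lemma zsumR_ext a b : (forall k, a k = b k) -> zsumR a = zsumR b.
Proof. intros E. f_equal. apply functional_extensionality, E. Qed.

Lemma zsummable_le a b : (forall k, Rabs (a k) <= b k) -> zsummable b -> zsummable a.
Proof.
  intros Hab [Hp Hn]. split.
  - apply ex_series_Rle with (2 := Hp); intros n; rewrite Rabs_Rabsolu.
    eapply Rle_trans; [apply Hab | apply Rle_abs].
  - apply ex_series_Rle with (2 := Hn); intros n; rewrite Rabs_Rabsolu.
    eapply Rle_trans; [apply Hab | apply Rle_abs].
Qed.

Lemma zsummable_abs a : zsummable a -> zsummable (fun k => Rabs (a k)).
Proof.
  intros [H1 H2].
  split; [apply ex_series_Rle with (2 := H1) | apply ex_series_Rle with (2 := H2)];
    intros n; rewrite !Rabs_Rabsolu; lra.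
Qed.

Lemma zsummable_plus a b : zsummable a -> zsummable b -> zsummable (fun k => a k + b k).
Proof.
  intros [Ha1 Ha2] [Hb1 Hb2]. split.
  - apply ex_series_Rle with (2 := (ex_series_plus _ _ Ha1 Hb1)); intros n; rewrite Rabs_Rabsolu.
    apply Rabs_triang.
  - apply ex_series_Rle with (2 := (ex_series_plus _ _ Ha2 Hb2)); intros n; rewrite Rabs_Rabsolu.
    apply Rabs_triang.
Qed.

Lemma zsummable_scal a c : zsummable c -> zsummable (fun k => a * c k).
Proof.
  intros [H1 H2].
  split; [apply ex_series_Rle with (2 := ex_series_scal_l (Rabs a) _ H1)
         |apply ex_series_Rle with (2 := ex_series_scal_l (Rabs a) _ H2)];
    intros n; rewrite Rabs_Rabsolu, Rabs_mult; apply Rle_refl.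
Qed.

Lemma zsummable_mul_bounded c u B :
  (forall k, Rabs (u k) <= B) -> zsummable c -> zsummable (fun k => c k * u k).
Proof.
  intros Hu Hc. apply (zsummable_le _ (fun k => B * Rabs (c k))).
  - intros k. rewrite Rabs_mult. generalize (Hu k) (Rabs_pos (c k)) (Rabs_pos (u k)). nra.
  - apply zsummable_scal, zsummable_abs, Hc.
Qed.

Lemma ex_series_abs_zpair a : zsummable a -> ex_series (fun n => Rabs (zpair a n)).
Proof.
  intros [H1 H2].
  apply (ex_series_Rle _ (fun n => Rabs (a (Z.of_nat (S n))) + Rabs (a (- Z.of_nat (S n))%Z))).
  - intros n. rewrite Rabs_Rabsolu. apply Rabs_triang.
  - exact (ex_series_plus _ _ (proj1 (ex_series_incr_1 _) H1) (proj1 (ex_series_incr_1 _) H2)).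
Qed.

Lemma ex_series_zpair a : zsummable a -> ex_series (zpair a).
Proof. intros H. apply ex_series_Rabs, ex_series_abs_zpair, H. Qed.

Lemma zsumR_scal c a : zsumR (fun k => c * a k) = c * zsumR a.
Proof.
  rewrite !zsumR_zpair, Rmult_plus_distr_l, <- Series_scal_l.
  f_equal. apply Series_ext. intros n. unfold zpair. ring.
Qed.

Lemma zsumR_mulr a c : zsumR (fun k => a k * c) = zsumR a * c.
Proof.
  rewrite Rmult_comm, <- zsumR_scal. apply zsumR_ext. intros k. ring.
Qed.

Lemma zsumR_zero : zsumR (fun _ => 0) = 0.
Proof.
  rewrite (zsumR_ext _ (fun _ => 0 * 0)) by (intros; ring). rewrite zsumR_scal. ring.
Qed.

Lemma zsumR_plus a b :
  zsummable a -> zsummable b -> zsumR (fun k => a k + b k) = zsumR a + zsumR b.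
Proof.
  intros Ha Hb. rewrite !zsumR_zpair.
  rewrite (Series_ext _ (fun n => zpair a n + zpair b n)) by (intros n; unfold zpair; ring).
  rewrite Series_plus by (apply ex_series_zpair; assumption). ring.
Qed.

Lemma zsumR_minus a b :
  zsummable a -> zsummable b -> zsumR (fun k => a k - b k) = zsumR a - zsumR b.
Proof.
  intros Ha Hb. rewrite !zsumR_zpair.
  rewrite (Series_ext _ (fun n => zpair a n - zpair b n)) by (intros n; unfold zpair; ring).
  rewrite Series_minus by (apply ex_series_zpair; assumption). ring.
Qed.

Lemma zsumR_abs_le a b :
  (forall k, Rabs (a k) <= b k) -> zsummable b -> Rabs (zsumR a) <= zsumR b.
Proof.
  intros Hab Hb. assert (Ha : zsummable a) by (apply zsummable_le with b; auto).
  assert (Hpair : forall n, Rabs (zpair a n) <= zpair b n).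
  { intros n. unfold zpair. eapply Rle_trans; [apply Rabs_triang|]. apply Rplus_le_compat; apply Hab. }
  rewrite !zsumR_zpair. eapply Rle_trans; [apply Rabs_triang|].
  apply Rplus_le_compat; [apply Hab|].
  eapply Rle_trans; [apply Series_Rabs, ex_series_abs_zpair, Ha|].
  apply Series_le; [|apply ex_series_zpair, Hb].
  intros n. split; [apply Rabs_pos | apply Hpair].
Qed.

Lemma zsumR_nonneg a : (forall k, 0 <= a k) -> zsummable a -> 0 <= zsumR a.
Proof.
  intros Ha Hs. rewrite zsumR_zpair. apply Rplus_le_le_0_compat; [apply Ha|].
  apply Series_nonneg; [|apply ex_series_zpair, Hs].
  intros n. unfold zpair. generalize (Ha (Z.of_nat (S n))) (Ha (- Z.of_nat (S n))%Z). lra.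
Qed.

Lemma zsumR_le a b :
  (forall k, a k <= b k) -> zsummable a -> zsummable b -> zsumR a <= zsumR b.
Proof.
  intros Hab Ha Hb.
  assert (Hd : zsummable (fun k => b k - a k)).
  { apply (zsummable_le _ (fun k => Rabs (b k) + Rabs (a k))).
    - intros k. unfold Rminus. rewrite <- (Rabs_Ropp (a k)). apply Rabs_triang.
    - apply zsummable_plus; apply zsummable_abs; assumption. }
  assert (Hnn : forall k, 0 <= b k - a k) by (intros k; generalize (Hab k); lra).
  assert (H := zsumR_nonneg _ Hnn Hd).
  rewrite zsumR_minus in H by assumption. lra.
Qed.

Lemma zsumR_delta a k0 : (forall k, k <> k0 -> a k = 0) -> zsumR a = a k0.
Proof.
  intros Ha. rewrite zsumR_zpair.
  destruct (Z.eq_dec k0 0) as [->|Hk0].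
  - rewrite (Series_ext _ (fun _ => 0)), Series_zero; [ring|].
    intros n. unfold zpair. rewrite !Ha by lia. ring.
  - set (n0 := (Z.to_nat (Z.abs k0) - 1)%nat).
    assert (Hz : forall n, n <> n0 -> zpair a n = 0).
    { intros n Hn. unfold zpair. rewrite !Ha by lia. ring. }
    rewrite (is_series_unique _ _ (is_series_delta _ n0 Hz)), (Ha 0%Z) by lia.
    unfold zpair. destruct (Z_lt_le_dec 0 k0).
    + replace (Z.of_nat (S n0)) with k0 by lia. rewrite (Ha (- k0)%Z) by lia. ring.
    + replace (- Z.of_nat (S n0))%Z with k0 by lia. rewrite (Ha (Z.of_nat (S n0))) by lia. ring.
Qed.

Lemma zsumR_term_le a k0 : (forall k, 0 <= a k) -> zsummable a -> a k0 <= zsumR a.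
Proof.
  intros Ha Hs. set (d k := if Z.eq_dec k k0 then a k0 else 0).
  assert (Hd : forall k, 0 <= d k <= a k).
  { intros k. unfold d. generalize (Ha k) (Ha k0). destruct (Z.eq_dec k k0) as [->|]; lra. }
  replace (a k0) with (d k0) by (unfold d; destruct (Z.eq_dec k0 k0); tauto).
  rewrite <- (zsumR_delta d k0) by (intros k Hk; unfold d; destruct (Z.eq_dec k k0); tauto).
  apply zsumR_le; auto; [intros k; apply Hd|].
  apply (zsummable_le _ a); auto.
  intros k. rewrite Rabs_pos_eq; apply Hd.
Qed.

Lemma zsumR_split (a : Z -> R) (A B : R) :
  is_series (fun n => a (Z.of_nat n)) A ->
  is_series (fun n => a (- Z.of_nat (S n))%Z) B -> zsumR a = A + B.
Proof.
  intros HA HB. rewrite zsumR_zpair.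
  assert (HA1 : is_series (fun n => a (Z.of_nat (S n))) (A - a 0%Z)).
  { apply (is_series_incr_1 (fun n => a (Z.of_nat n))).
    match goal with |- is_series _ ?l => replace l with A; [exact HA|] end.
    change (A = A - a 0%Z + a 0%Z). ring. }
  rewrite (is_series_unique (zpair a) (A - a 0%Z + B)); [ring|].
  exact (is_series_plus _ _ _ _ HA1 HB).
Qed.

Lemma zsummable_zero : zsummable (fun _ => 0).
Proof.
  assert (H0 : ex_series (fun _ : nat => Rabs 0)).
  { exists (Rabs 0). apply (is_series_delta (fun _ => Rabs 0) 0%nat). intros; apply Rabs_R0. }
  split; exact H0.
Qed.

Lemma zsummable_psum (F : nat -> Z -> R) n :
  (forall i, zsummable (F i)) -> zsummable (fun k => psum (fun i => F i k) n).
Proof.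
  intros H. induction n; simpl; [apply zsummable_zero | apply zsummable_plus; auto].
Qed.

Lemma psum_zsumR (F : nat -> Z -> R) n : (forall i, zsummable (F i)) ->
  psum (fun i => zsumR (F i)) n = zsumR (fun k => psum (fun i => F i k) n).
Proof.
  intros H. induction n; simpl.
  - symmetry. apply zsumR_zero.
  - rewrite IHn, zsumR_plus; auto using zsummable_psum.
Qed.

Definition class_ind (N l : nat) (k : Z) : R :=
  if Z.eqb ((k - Z.of_nat l) mod Z.of_nat N) 0 then 1 else 0.

Lemma class_ind_01 N l k : class_ind N l k = 0 \/ class_ind N l k = 1.
Proof. unfold class_ind. destruct (Z.eqb _ _); auto. Qed.

Lemma class_ind_mem (N l : nat) m :
  (0 < N)%nat -> class_ind N l (m * Z.of_nat N + Z.of_nat l) = 1.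
Proof.
  intros HN. unfold class_ind.
  replace (m * Z.of_nat N + Z.of_nat l - Z.of_nat l)%Z with (m * Z.of_nat N)%Z by ring.
  rewrite Z.mod_mul by lia. reflexivity.
Qed.

Lemma class_ind_nonzero (N l : nat) k :
  (0 < N)%nat -> class_ind N l k <> 0 -> exists m, k = (m * Z.of_nat N + Z.of_nat l)%Z.
Proof.
  intros HN. unfold class_ind.
  destruct (Z.eqb_spec ((k - Z.of_nat l) mod Z.of_nat N) 0) as [E|E]; [|lra].
  intros _. apply Z.mod_divide in E; [|lia]. destruct E as [m Hm]. exists m. lia.
Qed.

Lemma class_ind_off (N l : nat) (q s : Z) : (l < N)%nat -> (0 <= s < Z.of_nat N)%Z ->
  s <> Z.of_nat l -> class_ind N l (q * Z.of_nat N + s) = 0.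
Proof.
  intros Hl Hs Hne. destruct (class_ind_01 N l (q * Z.of_nat N + s)) as [|H1]; [assumption|].
  destruct (class_ind_nonzero N l (q * Z.of_nat N + s) ltac:(lia) ltac:(lra)) as [m Hm].
  destruct (Z.lt_trichotomy q m) as [|[->|]]; nia.
Qed.

Lemma class_ind_disjoint (N l l' : nat) k : (0 < N)%nat -> (l < N)%nat -> (l' < N)%nat ->
  l <> l' -> class_ind N l k * class_ind N l' k = 0.
Proof.
  intros HN Hl Hl' Hne.
  destruct (class_ind_01 N l k) as [-> | H1]; [ring|].
  destruct (class_ind_01 N l' k) as [-> | H1']; [ring|].
  destruct (class_ind_nonzero N l k HN ltac:(lra)) as [m Hm].
  destruct (class_ind_nonzero N l' k HN ltac:(lra)) as [m' Hm']. subst k.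
  destruct (Z.lt_trichotomy m m') as [|[->|]]; nia.
Qed.

Lemma Rabs_class_ind_mul N l k x : Rabs (class_ind N l k * x) <= Rabs x.
Proof.
  destruct (class_ind_01 N l k) as [-> | ->];
    rewrite ?Rmult_0_l, ?Rmult_1_l, ?Rabs_R0; [apply Rabs_pos | apply Rle_refl].
Qed.

Lemma is_series_class (N l : nat) (a : Z -> R) : (0 < N)%nat -> (l < N)%nat -> zsummable a ->
  is_series (fun n => a (Z.of_nat n * Z.of_nat N + Z.of_nat l)%Z)
    (Series (fun n => class_ind N l (Z.of_nat n) * a (Z.of_nat n))) /\
  is_series (fun n => a (- Z.of_nat (S n) * Z.of_nat N + Z.of_nat l)%Z)
    (Series (fun n => class_ind N l (- Z.of_nat (S n)) * a (- Z.of_nat (S n))%Z)).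
Proof.
  intros HN Hl [Ha1 Ha2].
  assert (Ha2' := proj1 (ex_series_incr_1 _) Ha2).
  split.
  - apply is_series_ext with (a := fun q => class_ind N l (Z.of_nat (q * N + l)) * a (Z.of_nat (q * N + l))).
    { intros q. replace (Z.of_nat (q * N + l)) with (Z.of_nat q * Z.of_nat N + Z.of_nat l)%Z by lia.
      rewrite class_ind_mem by exact HN. apply Rmult_1_l. }
    apply (is_series_progression N l (fun n => class_ind N l (Z.of_nat n) * a (Z.of_nat n)) _ Hl).
    + intros q s Hs Hne. replace (Z.of_nat (q * N + s)) with (Z.of_nat q * Z.of_nat N + Z.of_nat s)%Z by lia.
      rewrite class_ind_off by lia. ring.
    + apply Series_correct, ex_series_Rle with (2 := Ha1). intros n. apply Rabs_class_ind_mul.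
  - apply is_series_ext with (a := fun q => class_ind N l (- Z.of_nat (S (q * N + (N - 1 - l))))
                                        * a (- Z.of_nat (S (q * N + (N - 1 - l))))%Z).
    { intros q. replace (- Z.of_nat (S (q * N + (N - 1 - l))))%Z
        with (- Z.of_nat (S q) * Z.of_nat N + Z.of_nat l)%Z by lia.
      rewrite class_ind_mem by exact HN. apply Rmult_1_l. }
    apply (is_series_progression N (N - 1 - l)
      (fun n => class_ind N l (- Z.of_nat (S n)) * a (- Z.of_nat (S n))%Z) _ ltac:(lia)).
    + intros q s Hs Hne. replace (- Z.of_nat (S (q * N + s)))%Z
        with ((- Z.of_nat q - 1) * Z.of_nat N + (Z.of_nat N - Z.of_nat s - 1))%Z by lia.
      rewrite class_ind_off by lia. ring.
    + apply Series_correct, ex_series_Rle with (2 := Ha2'). intros n. apply Rabs_class_ind_mul.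
Qed.

Lemma zsumR_class (N l : nat) (a : Z -> R) : (0 < N)%nat -> (l < N)%nat -> zsummable a ->
  zsumR (fun m => a (m * Z.of_nat N + Z.of_nat l)%Z) = zsumR (fun k => class_ind N l k * a k).
Proof.
  intros HN Hl Ha. destruct (is_series_class N l a HN Hl Ha) as [H1 H2].
  rewrite (zsumR_split _ _ _ H1 H2). symmetry. destruct Ha as [Ha1 Ha2]. apply zsumR_split.
  - apply Series_correct, ex_series_Rle with (2 := Ha1). intros n. apply Rabs_class_ind_mul.
  - apply Series_correct, ex_series_Rle with (2 := proj1 (ex_series_incr_1 _) Ha2).
    intros n. apply Rabs_class_ind_mul.
Qed.

Lemma zsummable_class (N l : nat) (a : Z -> R) : (0 < N)%nat -> (l < N)%nat -> zsummable a ->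
  zsummable (fun m => a (m * Z.of_nat N + Z.of_nat l)%Z).
Proof.
  intros HN Hl Ha.
  destruct (is_series_class N l _ HN Hl (zsummable_abs a Ha)) as [H1 H2].
  split; [eexists; exact H1|].
  apply (ex_series_incr_1 (fun n => Rabs (a (- Z.of_nat n * Z.of_nat N + Z.of_nat l)%Z))).
  eexists; exact H2.
Qed.

(** * Termwise integration *)

Lemma Series_sub_sum_n_le (f : nat -> R) (b : nat -> R) n :
  (forall k, Rabs (f k) <= b k) -> ex_series b ->
  Rabs (Series f - sum_n f n) <= Series b - sum_n b n.
Proof.
  intros Hfb Hb.
  assert (Hf : ex_series f) by (apply ex_series_Rle with (2 := Hb); exact Hfb).
  assert (Htail : ex_series (fun k => b (S n + k)%nat)) by (apply ex_series_incr_n, Hb).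
  rewrite (Series_incr_n f (S n)), (Series_incr_n b (S n)), <- !sum_n_Reals by (lia || assumption).
  simpl pred. replace (sum_n f n + Series (fun k => f (S n + k)%nat) - sum_n f n)
    with (Series (fun k => f (S n + k)%nat)) by ring.
  replace (sum_n b n + Series (fun k => b (S n + k)%nat) - sum_n b n)
    with (Series (fun k => b (S n + k)%nat)) by ring.
  eapply Rle_trans; [apply Series_Rabs|apply Series_le]; auto.
  - apply ex_series_Rle with (2 := Htail). intros k. rewrite Rabs_Rabsolu. apply Hfb.
  - intros k. split; [apply Rabs_pos | apply Hfb].
Qed.

Lemma is_RInt_Series (f : nat -> R -> R) (b v : nat -> R) (a1 a2 : R) :
  ex_series b -> (forall n x, Rabs (f n x) <= b n) -> (forall n, is_RInt (f n) a1 a2 (v n)) ->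
  is_RInt (fun x => Series (fun n => f n x)) a1 a2 (Series v).
Proof.
  intros Hb Hfb Hv.
  assert (Hsum : forall n, is_RInt (fun x => sum_n (fun k => f k x) n) a1 a2 (sum_n v n)).
  { induction n as [|n IH].
    - apply is_RInt_ext with (f := f 0%nat); [intros x _; now rewrite sum_O|].
      rewrite sum_O. apply Hv.
    - apply is_RInt_ext with (f := fun x => sum_n (fun k => f k x) n + f (S n) x).
      + intros x _. now rewrite sum_Sn.
      + rewrite sum_Sn. apply (is_RInt_plus _ _ _ _ _ _ IH (Hv (S n))). }
  assert (Hunif : filterlim (fun n x => sum_n (fun k => f k x) n) eventually
                    (locally (fun x => Series (fun n => f n x)))).
  { intros P [eps HP].
    assert (Hlim : is_lim_seq (sum_n b) (Series b)) by exact (Series_correct _ Hb).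
    apply is_lim_seq_spec in Hlim. destruct (Hlim eps) as [N0 HN0].
    exists N0. intros n Hn. apply HP. intros x.
    change (Rabs (sum_n (fun k => f k x) n - Series (fun k => f k x)) < eps).
    rewrite Rabs_minus_sym. eapply Rle_lt_trans; [apply (Series_sub_sum_n_le _ b); auto|].
    specialize (HN0 n Hn). rewrite Rabs_minus_sym in HN0. eapply Rle_lt_trans; [apply Rle_abs|exact HN0]. }
  destruct (filterlim_RInt _ a1 a2 eventually eventually_filter _ _ Hsum Hunif) as [I [HI HRI]].
  replace (Series v) with I; [exact HRI|].
  symmetry. apply is_series_unique. exact HI.
Qed.

Lemma is_RInt_scalR (f : R -> R) a b k If :
  is_RInt f a b If -> is_RInt (fun x => k * f x) a b (k * If).
Proof. exact (is_RInt_scal f a b k If). Qed.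

Lemma is_RInt_ext_R (f g : R -> R) a b If :
  (forall x, f x = g x) -> is_RInt f a b If -> is_RInt g a b If.
Proof. intros E. apply is_RInt_ext. intros x _. apply E. Qed.

Lemma is_RInt_zsumR (f : Z -> R -> R) (b v : Z -> R) (a1 a2 : R) :
  zsummable b -> (forall k x, Rabs (f k x) <= b k) -> (forall k, is_RInt (f k) a1 a2 (v k)) ->
  is_RInt (fun x => zsumR (fun k => f k x)) a1 a2 (zsumR v).
Proof.
  intros Hb Hfb Hv. unfold zsumR.
  apply (is_RInt_plus _ _ _ _ _ _ (Hv 0%Z)).
  apply (is_RInt_Series (fun n x => zpair (fun k => f k x) n) (zpair b) (zpair v)).
  - apply ex_series_zpair, Hb.
  - intros n x. unfold zpair. eapply Rle_trans; [apply Rabs_triang|].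
    apply Rplus_le_compat; apply Hfb.
  - intros n. apply (is_RInt_plus _ _ _ _ _ _ (Hv _) (Hv _)).
Qed.

(** * Fourier series with summable coefficients *)

Lemma Rabs_cos_le x : Rabs (cos x) <= 1.
Proof. apply Rabs_le, COS_bound. Qed.

Lemma Rabs_sin_le x : Rabs (sin x) <= 1.
Proof. apply Rabs_le, SIN_bound. Qed.

Lemma Rabs_mul_le1 a s : Rabs s <= 1 -> Rabs (a * s) <= Rabs a.
Proof. intros Hs. rewrite Rabs_mult. generalize (Rabs_pos a). nra. Qed.

Lemma Rabs_mul2_le1 a s t : Rabs s <= 1 -> Rabs t <= 1 -> Rabs (a * s * t) <= Rabs a.
Proof.
  intros Hs Ht. rewrite Rmult_assoc. apply Rabs_mul_le1.
  rewrite Rabs_mult. generalize (Rabs_pos s) (Rabs_pos t). nra.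
Qed.

Ltac trig_bound :=
  repeat first [ apply Rabs_mul2_le1 | apply Rabs_mul_le1 | apply Rabs_cos_le | apply Rabs_sin_le ].

Lemma sin_IZR_PI p : sin (IZR p * PI) = 0.
Proof. apply sin_eq_0_1. exists p. reflexivity. Qed.

Lemma is_RInt_const_R (c : R) : is_RInt (fun _ => c) (- PI) PI (2 * PI * c).
Proof.
  assert (H := is_RInt_const (V := R_NormedModule) (- PI) PI c).
  match type of H with is_RInt _ _ _ ?v => replace (2 * PI * c) with v; [exact H|] end.
  change ((PI - - PI) * c = 2 * PI * c). ring.
Qed.

Lemma is_RInt_cos_IZR (p : Z) :
  is_RInt (fun x => cos (IZR p * x)) (- PI) PI (if Z.eqb p 0 then 2 * PI else 0).
Proof.
  destruct (Z.eqb_spec p 0) as [->|Hp].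
  - apply is_RInt_ext with (f := fun _ => 1).
    + intros x _. rewrite Rmult_0_l, cos_0. reflexivity.
    + rewrite <- (Rmult_1_r (2 * PI)). apply is_RInt_const_R.
  - assert (Hp' : IZR p <> 0) by (apply not_0_IZR; exact Hp).
    replace 0 with (sin (IZR p * PI) / IZR p - sin (IZR p * - PI) / IZR p)
      by (rewrite <- Ropp_mult_distr_r, sin_neg, sin_IZR_PI; field; exact Hp').
    apply (is_RInt_derive (fun x => sin (IZR p * x) / IZR p)).
    + intros x _. auto_derive; auto. field. exact Hp'.
    + intros x _. apply (ex_derive_continuous (fun x => cos (IZR p * x))). auto_derive. auto.
Qed.

Lemma is_RInt_sin_IZR (p : Z) : is_RInt (fun x => sin (IZR p * x)) (- PI) PI 0.
Proof.
  destruct (Z.eqb_spec p 0) as [->|Hp].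
  - apply is_RInt_ext with (f := fun _ => 0).
    + intros x _. rewrite Rmult_0_l, sin_0. reflexivity.
    + assert (H := is_RInt_const_R 0). rewrite Rmult_0_r in H. exact H.
  - assert (Hp' : IZR p <> 0) by (apply not_0_IZR; exact Hp).
    replace 0 with (- cos (IZR p * PI) / IZR p - - cos (IZR p * - PI) / IZR p)
      by (rewrite <- Ropp_mult_distr_r, cos_neg; field; exact Hp').
    apply (is_RInt_derive (fun x => - cos (IZR p * x) / IZR p)).
    + intros x _. auto_derive; auto. field. exact Hp'.
    + intros x _. apply (ex_derive_continuous (fun x => sin (IZR p * x))). auto_derive. auto.
Qed.

Definition cos_series (c : Z -> R) (x : R) : R := zsumR (fun k => c k * cos (IZR k * x)).

Definition sin_series (c : Z -> R) (x : R) : R := zsumR (fun k => c k * sin (IZR k * x)).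

Definition fourier_series (c : Z -> R) (x : R) : C := (cos_series c x, sin_series c x).

Lemma cos_series_scal a c x : cos_series (fun k => a * c k) x = a * cos_series c x.
Proof. unfold cos_series. rewrite <- zsumR_scal. apply zsumR_ext. intros; ring. Qed.

Lemma sin_series_scal a c x : sin_series (fun k => a * c k) x = a * sin_series c x.
Proof. unfold sin_series. rewrite <- zsumR_scal. apply zsumR_ext. intros; ring. Qed.

Section FourierSeries.

Variable c : Z -> R.
Hypothesis Hc : zsummable c.

Let zsummable_dominated (u : Z -> R) : (forall j, Rabs (u j) <= Rabs (c j)) -> zsummable u.
Proof. intros Hu. exact (zsummable_le _ _ Hu (zsummable_abs _ Hc)). Qed.

Let zsummable_trig_scal (u : Z -> R) a :
  (forall j, Rabs (u j) <= 1) -> zsummable (fun j => c j * u j * a).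
Proof.
  intros Hu. apply (zsummable_mul_bounded (fun j => c j * u j) (fun _ => a) (Rabs a)).
  - intros; apply Rle_refl.
  - apply zsummable_dominated. intros j. apply Rabs_mul_le1, Hu.
Qed.

Lemma cos_series_bound x : Rabs (cos_series c x) <= zsumR (fun k => Rabs (c k)).
Proof. apply zsumR_abs_le; [|apply zsummable_abs, Hc]. intros k. trig_bound. Qed.

Lemma sin_series_bound x : Rabs (sin_series c x) <= zsumR (fun k => Rabs (c k)).
Proof. apply zsumR_abs_le; [|apply zsummable_abs, Hc]. intros k. trig_bound. Qed.

Lemma fourier_series_phi_re k x :
  cos_series c x * cos (IZR k * x) + sin_series c x * sin (IZR k * x)
  = zsumR (fun j => c j * cos (IZR (j - k) * x)).
Proof.
  unfold cos_series, sin_series. rewrite <- !zsumR_mulr, <- zsumR_plus.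
  - apply zsumR_ext. intros j. rewrite minus_IZR, Rmult_minus_distr_r, cos_minus. ring.
  - apply zsummable_trig_scal. intros j. trig_bound.
  - apply zsummable_trig_scal. intros j. trig_bound.
Qed.

Lemma fourier_series_phi_im k x :
  sin_series c x * cos (IZR k * x) - cos_series c x * sin (IZR k * x)
  = zsumR (fun j => c j * sin (IZR (j - k) * x)).
Proof.
  unfold cos_series, sin_series. rewrite <- !zsumR_mulr, <- zsumR_minus.
  - apply zsumR_ext. intros j. rewrite minus_IZR, Rmult_minus_distr_r, sin_minus. ring.
  - apply zsummable_trig_scal. intros j. trig_bound.
  - apply zsummable_trig_scal. intros j. trig_bound.
Qed.

Lemma fourier_series_mul_re Cd Sd x :
  zsumR (fun j => c j * (Cd * cos (IZR j * x) + Sd * sin (IZR j * x)))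
  = cos_series c x * Cd + sin_series c x * Sd.
Proof.
  unfold cos_series, sin_series. rewrite <- !zsumR_mulr, <- zsumR_plus.
  - apply zsumR_ext. intros j. ring.
  - apply zsummable_trig_scal. intros j. trig_bound.
  - apply zsummable_trig_scal. intros j. trig_bound.
Qed.

Lemma fourier_series_mul_im Cd Sd x :
  zsumR (fun j => - c j * (Sd * cos (IZR j * x) - Cd * sin (IZR j * x)))
  = sin_series c x * Cd - cos_series c x * Sd.
Proof.
  unfold cos_series, sin_series. rewrite <- !zsumR_mulr, <- zsumR_minus.
  - apply zsumR_ext. intros j. ring.
  - apply zsummable_trig_scal. intros j. trig_bound.
  - apply zsummable_trig_scal. intros j. trig_bound.
Qed.

Lemma is_RInt_fourier_phi_re k :
  is_RInt (fun x => cos_series c x * cos (IZR k * x) + sin_series c x * sin (IZR k * x))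
    (- PI) PI (2 * PI * c k).
Proof.
  apply is_RInt_ext with (f := fun x => zsumR (fun j => c j * cos (IZR (j - k) * x))).
  { intros x _. symmetry. apply fourier_series_phi_re. }
  replace (2 * PI * c k) with (zsumR (fun j => c j * (if Z.eqb (j - k) 0 then 2 * PI else 0))).
  - apply is_RInt_zsumR with (b := fun j => Rabs (c j)).
    + apply zsummable_abs, Hc.
    + intros j x. trig_bound.
    + intros j. apply is_RInt_scalR, is_RInt_cos_IZR.
  - rewrite (zsumR_delta _ k), Z.sub_diag; [simpl; ring|].
    intros j Hj. destruct (Z.eqb_spec (j - k) 0); [lia | ring].
Qed.

Lemma is_RInt_fourier_phi_im k :
  is_RInt (fun x => sin_series c x * cos (IZR k * x) - cos_series c x * sin (IZR k * x))
    (- PI) PI 0.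
Proof.
  apply is_RInt_ext with (f := fun x => zsumR (fun j => c j * sin (IZR (j - k) * x))).
  { intros x _. symmetry. apply fourier_series_phi_im. }
  rewrite <- zsumR_zero, (zsumR_ext (fun _ => 0) (fun j => c j * 0)) by (intros; ring).
  apply is_RInt_zsumR with (b := fun j => Rabs (c j)).
  - apply zsummable_abs, Hc.
  - intros j x. trig_bound.
  - intros j. apply is_RInt_scalR, is_RInt_sin_IZR.
Qed.

End FourierSeries.

Lemma Rabs_trig_comb_le a A B s t D :
  Rabs s <= 1 -> Rabs t <= 1 -> Rabs A <= D -> Rabs B <= D ->
  Rabs (a * (A * s + B * t)) <= 2 * D * Rabs a /\ Rabs (a * (A * s - B * t)) <= 2 * D * Rabs a.
Proof.
  intros Hs Ht HA HB.
  assert (HAs : Rabs (A * s) <= D) by (rewrite Rabs_mult; generalize (Rabs_pos A) (Rabs_pos s); nra).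
  assert (HBt : Rabs (B * t) <= D) by (rewrite Rabs_mult; generalize (Rabs_pos B) (Rabs_pos t); nra).
  assert (Hp : Rabs (A * s + B * t) <= 2 * D) by (generalize (Rabs_triang (A * s) (B * t)); lra).
  assert (Hm : Rabs (A * s - B * t) <= 2 * D).
  { unfold Rminus. generalize (Rabs_triang (A * s) (- (B * t))). rewrite Rabs_Ropp. lra. }
  rewrite !(Rabs_mult a). generalize (Rabs_pos a). split; nra.
Qed.

Lemma is_RInt_fourier_prod_re c d : zsummable c -> zsummable d ->
  is_RInt (fun x => cos_series c x * cos_series d x + sin_series c x * sin_series d x)
    (- PI) PI (2 * PI * zsumR (fun j => c j * d j)).
Proof.
  intros Hc Hd. set (D := zsumR (fun j => Rabs (d j))).
  apply is_RInt_ext with (f := fun x =>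
    zsumR (fun j => c j * (cos_series d x * cos (IZR j * x) + sin_series d x * sin (IZR j * x)))).
  { intros x _. apply fourier_series_mul_re, Hc. }
  replace (2 * PI * zsumR (fun j => c j * d j)) with (zsumR (fun j => c j * (2 * PI * d j)))
    by (rewrite <- zsumR_scal; apply zsumR_ext; intros; ring).
  apply is_RInt_zsumR with (b := fun j => 2 * D * Rabs (c j)).
  - apply zsummable_scal, zsummable_abs, Hc.
  - intros j x. apply Rabs_trig_comb_le;
      [apply Rabs_cos_le | apply Rabs_sin_le | apply cos_series_bound | apply sin_series_bound]; exact Hd.
  - intros j. apply is_RInt_scalR, is_RInt_fourier_phi_re, Hd.
Qed.

Lemma is_RInt_fourier_prod_im c d : zsummable c -> zsummable d ->
  is_RInt (fun x => sin_series c x * cos_series d x - cos_series c x * sin_series d x)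
    (- PI) PI 0.
Proof.
  intros Hc Hd. set (D := zsumR (fun j => Rabs (d j))).
  apply is_RInt_ext with (f := fun x =>
    zsumR (fun j => - c j * (sin_series d x * cos (IZR j * x) - cos_series d x * sin (IZR j * x)))).
  { intros x _. apply fourier_series_mul_im, Hc. }
  rewrite <- zsumR_zero, (zsumR_ext (fun _ => 0) (fun j => - c j * 0)) by (intros; ring).
  apply is_RInt_zsumR with (b := fun j => 2 * D * Rabs (c j)).
  - apply zsummable_scal, zsummable_abs, Hc.
  - intros j x. rewrite <- (Rabs_Ropp (c j)). apply Rabs_trig_comb_le;
      [apply Rabs_cos_le | apply Rabs_sin_le | apply sin_series_bound | apply cos_series_bound]; exact Hd.
  - intros j. apply is_RInt_scalR, is_RInt_fourier_phi_im, Hd.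
Qed.

Lemma ip_of_is_RInt (f h : R -> C) (u v : R) :
  is_RInt (fun x => fst (Cmult (f x) (Cconj (h x)))) (- PI) PI (2 * PI * u) ->
  is_RInt (fun x => snd (Cmult (f x) (Cconj (h x)))) (- PI) PI (2 * PI * v) ->
  ip f h = (u, v).
Proof.
  intros Hre Him. unfold ip, CInt.
  rewrite (is_RInt_unique _ _ _ _ Hre), (is_RInt_unique _ _ _ _ Him).
  assert (PI_neq0 : PI <> 0) by (generalize PI_RGT_0; lra).
  unfold Cmult, RtoC. simpl. f_equal; field; exact PI_neq0.
Qed.

Lemma ip_fourier_series_phi c k : zsummable c -> ip (fourier_series c) (phi k) = RtoC (c k).
Proof.
  intros Hc. apply ip_of_is_RInt.
  - eapply is_RInt_ext_R; [|apply is_RInt_fourier_phi_re, Hc].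
    intros x. unfold fourier_series, phi, Cmult, Cconj. simpl. ring.
  - rewrite Rmult_0_r. eapply is_RInt_ext_R; [|apply (is_RInt_fourier_phi_im c Hc k)].
    intros x. unfold fourier_series, phi, Cmult, Cconj. simpl. ring.
Qed.

Lemma ip_fourier_series c d : zsummable c -> zsummable d ->
  ip (fourier_series c) (fourier_series d) = RtoC (zsumR (fun j => c j * d j)).
Proof.
  intros Hc Hd. apply ip_of_is_RInt.
  - eapply is_RInt_ext_R; [|apply (is_RInt_fourier_prod_re c d Hc Hd)].
    intros x. unfold fourier_series, Cmult, Cconj. simpl. ring.
  - rewrite Rmult_0_r. eapply is_RInt_ext_R; [|apply (is_RInt_fourier_prod_im c d Hc Hd)].
    intros x. unfold fourier_series, Cmult, Cconj. simpl. ring.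
Qed.

(** * Sampling on the grid *)

Lemma trig_IZR_2PI (n : Z) : sin (IZR n * (2 * PI)) = 0 /\ cos (IZR n * (2 * PI)) = 1.
Proof.
  split.
  - replace (IZR n * (2 * PI)) with (IZR (2 * n) * PI) by (rewrite mult_IZR; ring).
    apply sin_IZR_PI.
  - replace (IZR n * (2 * PI)) with (2 * (IZR n * PI)) by ring.
    rewrite cos_2a_sin, sin_IZR_PI. ring.
Qed.

Section Grid.

Variables N h : nat.
Hypothesis HNh : N = (2 * h)%nat.
Hypothesis HN : (0 < N)%nat.

Let INR_N_neq0 : INR N <> 0.
Proof. apply not_0_INR. lia. Qed.

(* Aliasing: since N is even, [(m N + p) x_i] and [p x_i] differ by a multiple of 2 pi. *)
Lemma trig_grid_alias (m p : Z) i :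
  cos (IZR (m * Z.of_nat N + p) * grid N i) = cos (IZR p * grid N i) /\
  sin (IZR (m * Z.of_nat N + p) * grid N i) = sin (IZR p * grid N i).
Proof.
  replace (IZR (m * Z.of_nat N + p) * grid N i)
    with (IZR p * grid N i + IZR (m * Z.of_nat i - m * Z.of_nat h) * (2 * PI)).
  - destruct (trig_IZR_2PI (m * Z.of_nat i - m * Z.of_nat h)) as [Hs Hc].
    rewrite cos_plus, sin_plus, Hs, Hc. split; ring.
  - unfold grid. rewrite plus_IZR, minus_IZR, !mult_IZR, <- !INR_IZR_INZ.
    assert (E : INR N = 2 * INR h) by (rewrite HNh, mult_INR; reflexivity).
    rewrite E. field. apply not_0_INR. lia.
Qed.

Lemma psum_grid_trig_mul (q : Z) :
  psum (fun i => cos (IZR (q * Z.of_nat N) * grid N i)) N = INR N /\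
  psum (fun i => sin (IZR (q * Z.of_nat N) * grid N i)) N = 0.
Proof.
  assert (Ht : forall i, cos (IZR (q * Z.of_nat N) * grid N i) = 1 /\
                         sin (IZR (q * Z.of_nat N) * grid N i) = 0).
  { intros i. rewrite <- (Z.add_0_r (q * Z.of_nat N)).
    destruct (trig_grid_alias q 0 i) as [-> ->]. rewrite Rmult_0_l, cos_0, sin_0. auto. }
  rewrite (psum_ext _ (fun _ => 1)), (psum_ext (fun i => sin _) (fun _ => 0)), !psum_const
    by (intros; apply Ht). split; ring.
Qed.

(* Telescoping: with [b = p pi / N], [2 sin b cos (p x_i) = sin (p x_(i+1) - b) - sin (p x_i - b)]
   and similarly for [sin (p x_i)]; [sin b <> 0] exactly when [N] does not divide [p]. *)
Lemma psum_grid_trig_nonmul (p : Z) : (p mod Z.of_nat N <> 0)%Z ->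
  psum (fun i => cos (IZR p * grid N i)) N = 0 /\ psum (fun i => sin (IZR p * grid N i)) N = 0.
Proof.
  intros E. set (b := IZR p * PI / INR N).
  assert (Hsb : sin b <> 0).
  { intros Hs. apply sin_eq_0_0 in Hs. destruct Hs as [z Hz]. apply E.
    apply Z.mod_divide; [lia|]. exists z. apply eq_IZR. rewrite mult_IZR, <- INR_IZR_INZ.
    unfold b in Hz. assert (HPI : PI <> 0) by (generalize PI_RGT_0; lra).
    apply (Rmult_eq_reg_r (PI / INR N)).
    - transitivity (IZR p * PI / INR N); [field; exact INR_N_neq0|]. rewrite Hz. field. exact INR_N_neq0.
    - apply Rmult_integral_contrapositive. split; [exact HPI | apply Rinv_neq_0_compat, INR_N_neq0]. }
  assert (Hstep : forall i, IZR p * grid N (S i) = IZR p * grid N i + 2 * b).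
  { intros i. unfold grid, b. rewrite S_INR. field. exact INR_N_neq0. }
  assert (Hlast : IZR p * grid N N = IZR p * PI) by (unfold grid; field; exact INR_N_neq0).
  assert (Hfirst : IZR p * grid N 0 = - (IZR p * PI)) by (unfold grid; simpl; ring).
  assert (Hsp := sin_IZR_PI p).
  split.
  - assert (Ht := psum_telescope (fun i => sin (IZR p * grid N i - b)) N).
    rewrite (psum_ext _ (fun i => (2 * sin b) * cos (IZR p * grid N i))) in Ht.
    + rewrite psum_scal, Hlast, Hfirst in Ht.
      replace (- (IZR p * PI) - b) with (- (IZR p * PI + b)) in Ht by ring.
      rewrite sin_neg, sin_minus, sin_plus, Hsp in Ht. ring_simplify in Ht.
      apply Rmult_integral in Ht. destruct Ht as [Ht|Ht]; [lra | exact Ht].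
    + intros i. rewrite Hstep. replace (IZR p * grid N i + 2 * b - b) with (IZR p * grid N i + b) by ring.
      rewrite sin_plus, sin_minus. ring.
  - assert (Ht := psum_telescope (fun i => cos (IZR p * grid N i - b)) N).
    rewrite (psum_ext _ (fun i => (- 2 * sin b) * sin (IZR p * grid N i))) in Ht.
    + rewrite psum_scal, Hlast, Hfirst in Ht.
      replace (- (IZR p * PI) - b) with (- (IZR p * PI + b)) in Ht by ring.
      rewrite cos_neg, cos_minus, cos_plus, Hsp in Ht. ring_simplify in Ht.
      apply Rmult_integral in Ht. destruct Ht as [Ht|Ht]; [lra | exact Ht].
    + intros i. rewrite Hstep. replace (IZR p * grid N i + 2 * b - b) with (IZR p * grid N i + b) by ring.
      rewrite cos_plus, cos_minus. ring.
Qed.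

Lemma psum_grid_trig (p : Z) :
  psum (fun i => cos (IZR p * grid N i)) N = INR N * (if Z.eqb (p mod Z.of_nat N) 0 then 1 else 0) /\
  psum (fun i => sin (IZR p * grid N i)) N = 0.
Proof.
  destruct (Z.eqb_spec (p mod Z.of_nat N) 0) as [E|E].
  - apply Z.mod_divide in E; [|lia]. destruct E as [q ->].
    rewrite Rmult_1_r. apply psum_grid_trig_mul.
  - rewrite Rmult_0_r. apply psum_grid_trig_nonmul, E.
Qed.

Lemma psum_grid_trig_shift (l : nat) (k : Z) (a : R) :
  psum (fun i => cos (a - IZR (k - Z.of_nat l) * grid N i)) N = INR N * class_ind N l k * cos a /\
  psum (fun i => sin (a - IZR (k - Z.of_nat l) * grid N i)) N = INR N * class_ind N l k * sin a.
Proof.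
  destruct (psum_grid_trig (k - Z.of_nat l)) as [Hc Hs]. unfold class_ind. split.
  - rewrite (psum_ext _ (fun i => cos a * cos (IZR (k - Z.of_nat l) * grid N i)
                                 + sin a * sin (IZR (k - Z.of_nat l) * grid N i)))
      by (intros; apply cos_minus).
    rewrite psum_plus, !psum_scal, Hc, Hs. ring.
  - rewrite (psum_ext _ (fun i => sin a * cos (IZR (k - Z.of_nat l) * grid N i)
                                 + - cos a * sin (IZR (k - Z.of_nat l) * grid N i)))
      by (intros; rewrite sin_minus; ring).
    rewrite psum_plus, !psum_scal, Hc, Hs. ring.
Qed.

End Grid.

(** * The kernel and the functions psi_l *)

Definition class_coef (g : R -> R) (M : R) (N l : nat) (k : Z) : R :=
  class_ind N l k * fst (Gcoef g M k).

Section Kernel.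

Variables (g : R -> R) (M : R).
Hypothesis HG_nonneg : forall k, snd (Gcoef g M k) = 0 /\ 0 <= fst (Gcoef g M k).
Hypothesis HG_sum : zsummable (fun k => fst (Gcoef g M k)).
Hypothesis HK_rkhs : forall x x', RtoC (Kern g M x x') =
  zsumC (fun k => Cmult (Gcoef g M k) (Cmult (phi k x) (Cconj (phi k x')))).

Lemma Gcoef_real k : Gcoef g M k = RtoC (fst (Gcoef g M k)).
Proof. unfold RtoC. rewrite <- (proj1 (HG_nonneg k)). apply surjective_pairing. Qed.

Lemma Cmod_Gcoef k : Cmod (Gcoef g M k) = fst (Gcoef g M k).
Proof. rewrite Gcoef_real, Cmod_R. apply Rabs_pos_eq, HG_nonneg. Qed.

Lemma zsummable_Gcoef_dominated (u : Z -> R) :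
  (forall k, Rabs (u k) <= Rabs (fst (Gcoef g M k))) -> zsummable u.
Proof. intros Hu. exact (zsummable_le _ _ Hu (zsummable_abs _ HG_sum)). Qed.

Lemma Kern_fourier x y :
  Kern g M x y = zsumR (fun k => fst (Gcoef g M k) * cos (IZR k * x - IZR k * y)) /\
  0 = zsumR (fun k => fst (Gcoef g M k) * sin (IZR k * x - IZR k * y)).
Proof.
  pose proof (HK_rkhs x y) as H. split.
  - apply (f_equal fst) in H. cbn [fst RtoC zsumC] in H. rewrite H.
    apply zsumR_ext. intros k. rewrite (Gcoef_real k). cbn [fst snd Cmult Cconj RtoC phi].
    rewrite cos_minus. ring.
  - apply (f_equal snd) in H. cbn [snd RtoC zsumC] in H. rewrite H.
    apply zsumR_ext. intros k. rewrite (Gcoef_real k). cbn [fst snd Cmult Cconj RtoC phi].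
    rewrite sin_minus. ring.
Qed.

(* Adding [0 = sum G_k sin (k (x - y))] turns the real kernel expansion into a complex one. *)
Lemma Kern_mul_trig (l : Z) x y :
  Kern g M x y * cos (IZR l * y) = zsumR (fun k => fst (Gcoef g M k) * cos (IZR k * x - IZR (k - l) * y)) /\
  Kern g M x y * sin (IZR l * y) = zsumR (fun k => fst (Gcoef g M k) * sin (IZR k * x - IZR (k - l) * y)).
Proof.
  destruct (Kern_fourier x y) as [HKc HKs].
  assert (Hdom : forall u v : Z -> R, (forall k, Rabs (u k) <= 1) -> (forall k, Rabs (v k) <= 1) ->
            zsummable (fun k => fst (Gcoef g M k) * u k * v k)).
  { intros u v Hu Hv. apply zsummable_Gcoef_dominated. intros k. apply Rabs_mul2_le1; auto. }
  split.
  - replace (Kern g M x y * cos (IZR l * y))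
      with (zsumR (fun k => fst (Gcoef g M k) * cos (IZR k * x - IZR k * y)) * cos (IZR l * y)
            - zsumR (fun k => fst (Gcoef g M k) * sin (IZR k * x - IZR k * y)) * sin (IZR l * y))
      by (rewrite <- HKc, <- HKs; ring).
    rewrite <- !zsumR_mulr, <- zsumR_minus.
    + apply zsumR_ext. intros k. rewrite minus_IZR.
      replace (IZR k * x - (IZR k - IZR l) * y) with ((IZR k * x - IZR k * y) + IZR l * y) by ring.
      rewrite cos_plus. ring.
    + apply Hdom; intros; apply Rabs_cos_le.
    + apply Hdom; intros; [apply Rabs_sin_le | apply Rabs_sin_le].
  - replace (Kern g M x y * sin (IZR l * y))
      with (zsumR (fun k => fst (Gcoef g M k) * cos (IZR k * x - IZR k * y)) * sin (IZR l * y)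
            + zsumR (fun k => fst (Gcoef g M k) * sin (IZR k * x - IZR k * y)) * cos (IZR l * y))
      by (rewrite <- HKc, <- HKs; ring).
    rewrite <- !zsumR_mulr, <- zsumR_plus.
    + apply zsumR_ext. intros k. rewrite minus_IZR.
      replace (IZR k * x - (IZR k - IZR l) * y) with ((IZR k * x - IZR k * y) + IZR l * y) by ring.
      rewrite sin_plus. ring.
    + apply Hdom; intros; [apply Rabs_cos_le | apply Rabs_sin_le].
    + apply Hdom; intros; [apply Rabs_sin_le | apply Rabs_cos_le].
Qed.

Variable N : nat.
Hypothesis HN : (0 < N)%nat.

Lemma class_coef_nonneg l k : 0 <= class_coef g M N l k.
Proof.
  unfold class_coef. apply Rmult_le_pos; [|apply HG_nonneg].
  destruct (class_ind_01 N l k) as [-> | ->]; lra.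
Qed.

Lemma zsummable_class_coef l : zsummable (class_coef g M N l).
Proof. apply (zsummable_le _ _ (fun k => Rabs_class_ind_mul N l k _)), zsummable_abs, HG_sum. Qed.

Lemma G1_class_coef l : (l < N)%nat -> G1 g M N l = zsumR (class_coef g M N l).
Proof.
  intros Hl. unfold G1. rewrite (zsumR_ext _ _ (fun m => Cmod_Gcoef _)).
  exact (zsumR_class N l (fun k => fst (Gcoef g M k)) HN Hl HG_sum).
Qed.

Lemma zsumR_class_trig l (u : Z -> R) : (l < N)%nat -> (forall k, Rabs (u k) <= 1) ->
  zsumR (fun m => fst (Gcoef g M (m * Z.of_nat N + Z.of_nat l)) * u (m * Z.of_nat N + Z.of_nat l)%Z)
  = zsumR (fun k => class_coef g M N l k * u k).
Proof.
  intros Hl Hu.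
  rewrite (zsumR_class N l (fun k => fst (Gcoef g M k) * u k) HN Hl
    (zsummable_Gcoef_dominated _ (fun k => Rabs_mul_le1 _ _ (Hu k)))).
  apply zsumR_ext. intros k. unfold class_coef. ring.
Qed.

Definition psi_coef l k := / sqrt (G1 g M N l) * class_coef g M N l k.

Lemma psi_fourier l : (l < N)%nat -> psi g M N l = fourier_series (psi_coef l).
Proof.
  intros Hl. apply functional_extensionality. intros x.
  unfold psi, zsumC, fourier_series, cos_series, sin_series, psi_coef.
  rewrite (zsumR_ext _ (fun m => fst (Gcoef g M (m * Z.of_nat N + Z.of_nat l))
                                 * cos (IZR (m * Z.of_nat N + Z.of_nat l) * x))),
          (zsumR_ext (fun m => snd _) (fun m => fst (Gcoef g M (m * Z.of_nat N + Z.of_nat l))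
                                 * sin (IZR (m * Z.of_nat N + Z.of_nat l) * x)))
    by (intros m; rewrite (Gcoef_real (m * _ + _)); cbn [fst snd Cmult RtoC phi]; ring).
  rewrite (zsumR_class_trig l (fun k => cos (IZR k * x))), (zsumR_class_trig l (fun k => sin (IZR k * x)))
    by (assumption || (intros; apply Rabs_cos_le) || (intros; apply Rabs_sin_le)).
  set (s := / sqrt (G1 g M N l)).
  rewrite (zsumR_ext (fun k => s * _ * cos _) (fun k => s * (class_coef g M N l k * cos (IZR k * x)))),
          (zsumR_ext (fun k => s * _ * sin _) (fun k => s * (class_coef g M N l k * sin (IZR k * x))))
    by (intros; ring).
  rewrite !zsumR_scal. unfold Cmult, RtoC. simpl. f_equal; ring.
Qed.

Lemma zsummable_psi_coef l : zsummable (psi_coef l).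
Proof. apply zsummable_scal, zsummable_class_coef. Qed.

Lemma ip_psi_phi l k : (l < N)%nat -> ip (psi g M N l) (phi k) = RtoC (psi_coef l k).
Proof. intros Hl. rewrite psi_fourier by exact Hl. apply ip_fourier_series_phi, zsummable_psi_coef. Qed.

Lemma ip_psi l l' : (l < N)%nat -> (l' < N)%nat ->
  ip (psi g M N l) (psi g M N l') = RtoC (zsumR (fun k => psi_coef l k * psi_coef l' k)).
Proof.
  intros Hl Hl'. rewrite !psi_fourier by assumption.
  apply ip_fourier_series; apply zsummable_psi_coef.
Qed.

Lemma psi_coef_sq l k : 0 < G1 g M N l ->
  psi_coef l k * psi_coef l k = / G1 g M N l * (class_ind N l k * fst (Gcoef g M k) ^ 2).
Proof.
  intros Hpos. unfold psi_coef, class_coef.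
  replace (/ G1 g M N l) with (/ sqrt (G1 g M N l) * / sqrt (G1 g M N l))
    by (rewrite <- Rinv_mult, sqrt_sqrt; lra).
  destruct (class_ind_01 N l k) as [-> | ->]; ring.
Qed.

Lemma rkhs_norm_psi l : (l < N)%nat -> 0 < G1 g M N l -> rkhs_norm g M (psi g M N l) = 1.
Proof.
  intros Hl Hpos. unfold rkhs_norm.
  rewrite (zsumR_ext _ (fun k => / G1 g M N l * class_coef g M N l k)).
  - rewrite zsumR_scal, <- G1_class_coef, Rinv_l by (assumption || lra). apply sqrt_1.
  - intros k. rewrite ip_psi_phi, Cmod_R, pow2_abs by exact Hl.
    replace (psi_coef l k ^ 2) with (psi_coef l k * psi_coef l k) by ring.
    rewrite psi_coef_sq by exact Hpos.
    (* The terms with [G k = 0] read [0 / 0]; their numerator vanishes, so both sides are [0]. *)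
    unfold class_coef. destruct (Req_dec (fst (Gcoef g M k)) 0) as [-> | HG0].
    + unfold Rdiv. ring.
    + field. split; [lra | exact HG0].
Qed.

Lemma G2_sq l : (l < N)%nat ->
  G2 g M N l ^ 2 = zsumR (fun k => class_ind N l k * fst (Gcoef g M k) ^ 2).
Proof.
  intros Hl.
  set (B := zsumR (fun k => fst (Gcoef g M k))).
  assert (Hsq : zsummable (fun k => fst (Gcoef g M k) ^ 2)).
  { apply (zsummable_le _ (fun k => B * fst (Gcoef g M k))); [|apply zsummable_scal, HG_sum].
    intros k. assert (HGk := zsumR_term_le _ k (fun k => proj2 (HG_nonneg k)) HG_sum).
    assert (HGk0 := proj2 (HG_nonneg k)). fold B in HGk.
    rewrite Rabs_pos_eq by apply pow2_ge_0. nra. }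
  unfold G2.
  rewrite (zsumR_ext _ (fun m => fst (Gcoef g M (m * Z.of_nat N + Z.of_nat l)) ^ 2))
    by (intros; now rewrite Cmod_Gcoef).
  rewrite pow2_sqrt.
  - exact (zsumR_class N l _ HN Hl Hsq).
  - apply zsumR_nonneg; [intros; apply pow2_ge_0 | exact (zsummable_class N l _ HN Hl Hsq)].
Qed.

Lemma L2norm_psi l : (l < N)%nat -> 0 < G1 g M N l ->
  L2norm (psi g M N l) = G2 g M N l / sqrt (G1 g M N l).
Proof.
  intros Hl Hpos. unfold L2norm. rewrite ip_psi by exact Hl. cbn [fst RtoC].
  rewrite (zsumR_ext _ _ (fun k => psi_coef_sq l k Hpos)), zsumR_scal, <- G2_sq by exact Hl.
  rewrite sqrt_mult_alt, sqrt_inv, sqrt_pow2 by (auto with real || (unfold G2; apply sqrt_pos)).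
  unfold Rdiv. ring.
Qed.

Lemma ip_psi_orthogonal l l' : (l < N)%nat -> (l' < N)%nat -> l' <> l ->
  ip (psi g M N l) (psi g M N l') = RtoC 0.
Proof.
  intros Hl Hl' Hne. rewrite ip_psi by assumption. f_equal.
  rewrite <- zsumR_zero. apply zsumR_ext. intros k. unfold psi_coef, class_coef.
  transitivity (/ sqrt (G1 g M N l) * / sqrt (G1 g M N l') * fst (Gcoef g M k) ^ 2
                * (class_ind N l k * class_ind N l' k)); [ring|].
  rewrite class_ind_disjoint by auto. ring.
Qed.

Variable h : nat.
Hypothesis HNh : N = (2 * h)%nat.

Lemma Kern_grid_sum l x :
  psum (fun i => Kern g M x (grid N i) * cos (IZR (Z.of_nat l) * grid N i)) N
    = INR N * cos_series (class_coef g M N l) x /\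
  psum (fun i => Kern g M x (grid N i) * sin (IZR (Z.of_nat l) * grid N i)) N
    = INR N * sin_series (class_coef g M N l) x.
Proof.
  unfold cos_series, sin_series. rewrite <- !zsumR_scal. split.
  - rewrite (psum_ext _ (fun i => zsumR (fun k =>
      fst (Gcoef g M k) * cos (IZR k * x - IZR (k - Z.of_nat l) * grid N i))))
      by (intros; apply Kern_mul_trig).
    rewrite psum_zsumR
      by (intros; apply zsummable_Gcoef_dominated; intros; apply Rabs_mul_le1, Rabs_cos_le).
    apply zsumR_ext. intros k.
    rewrite psum_scal, (proj1 (psum_grid_trig_shift N h HNh HN l k _)). unfold class_coef. ring.
  - rewrite (psum_ext _ (fun i => zsumR (fun k =>
      fst (Gcoef g M k) * sin (IZR k * x - IZR (k - Z.of_nat l) * grid N i))))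
      by (intros; apply Kern_mul_trig).
    rewrite psum_zsumR
      by (intros; apply zsummable_Gcoef_dominated; intros; apply Rabs_mul_le1, Rabs_sin_le).
    apply zsumR_ext. intros k.
    rewrite psum_scal, (proj2 (psum_grid_trig_shift N h HNh HN l k _)). unfold class_coef. ring.
Qed.

Lemma class_series_grid l i : (l < N)%nat ->
  cos_series (class_coef g M N l) (grid N i) = G1 g M N l * cos (IZR (Z.of_nat l) * grid N i) /\
  sin_series (class_coef g M N l) (grid N i) = G1 g M N l * sin (IZR (Z.of_nat l) * grid N i).
Proof.
  intros Hl. rewrite G1_class_coef by exact Hl. unfold cos_series, sin_series.
  rewrite <- !zsumR_mulr.
  split; apply zsumR_ext; intros k; unfold class_coef;
    (destruct (class_ind_01 N l k) as [-> | Hk]; [ring|]);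
    destruct (class_ind_nonzero N l k HN ltac:(lra)) as [m ->];
    destruct (trig_grid_alias N h HNh HN m (Z.of_nat l) i) as [Hc Hs];
    rewrite ?Hc, ?Hs; ring.
Qed.

Lemma Kern_grid_eigen l j : (l < N)%nat ->
  psum (fun i => Kern g M (grid N j) (grid N i) * cos (IZR (Z.of_nat l) * grid N i)) N
    = INR N * G1 g M N l * cos (IZR (Z.of_nat l) * grid N j) /\
  psum (fun i => Kern g M (grid N j) (grid N i) * sin (IZR (Z.of_nat l) * grid N i)) N
    = INR N * G1 g M N l * sin (IZR (Z.of_nat l) * grid N j).
Proof.
  intros Hl. destruct (Kern_grid_sum l (grid N j)) as [-> ->].
  destruct (class_series_grid l j Hl) as [-> ->]. split; ring.
Qed.

Lemma Kern_grid_sum_psi l x : (l < N)%nat ->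
  psum (fun i => Kern g M x (grid N i) * fst (psi g M N l (grid N i))) N
    = INR N * (G1 g M N l * fst (psi g M N l x)) /\
  psum (fun i => Kern g M x (grid N i) * snd (psi g M N l (grid N i))) N
    = INR N * (G1 g M N l * snd (psi g M N l x)).
Proof.
  intros Hl. rewrite psi_fourier by exact Hl. unfold fourier_series, psi_coef. cbn [fst snd].
  rewrite !cos_series_scal, !sin_series_scal.
  destruct (Kern_grid_sum l x) as [Hc Hs]. split.
  - rewrite (psum_ext _ (fun i => / sqrt (G1 g M N l) * G1 g M N l
                                  * (Kern g M x (grid N i) * cos (IZR (Z.of_nat l) * grid N i)))).
    + rewrite psum_scal, Hc. ring.
    + intros i. rewrite cos_series_scal, (proj1 (class_series_grid l i Hl)). ring.
  - rewrite (psum_ext _ (fun i => / sqrt (G1 g M N l) * G1 g M N l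
                                  * (Kern g M x (grid N i) * sin (IZR (Z.of_nat l) * grid N i)))).
    + rewrite psum_scal, Hs. ring.
    + intros i. rewrite sin_series_scal, (proj2 (class_series_grid l i Hl)). ring.
Qed.

End Kernel.

(* Imported only now: ssreflect's boolean [<] on [nat] would otherwise replace Peano's above. *)
From mathcomp Require Import all_boot all_algebra Rstruct.

Lemma big_sum_psum (F : nat -> R) n : (\sum_(i < n) F i)%R = psum F n.
Proof. by elim: n => [|n IH]; [rewrite big_ord0 | rewrite big_ord_recr /= IH]. Qed.

Lemma big_Cplus_psum (F : nat -> C) n :
  \big[Cplus/RtoC 0]_(i < n) F i = (psum (fun i => fst (F i)) n, psum (fun i => snd (F i)) n).
Proof.
  rewrite -!big_sum_psum; apply: injective_projections.
  - exact: (big_morph fst (id1 := 0%R) (op1 := Rplus)).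
  - exact: (big_morph snd (id1 := 0%R) (op1 := Rplus)).
Qed.

Lemma kmat_psum_eq0 g M N (f : nat -> R) : kmat g M N \in unitmx ->
  (forall j, (j < N)%N -> psum (fun i => Kern g M (grid N j) (grid N i) * f i) N = 0) ->
  forall i, (i < N)%N -> f i = 0.
Proof.
  move=> Hinv Hf i Hi.
  set u : 'cV[R]_N := (\col_(j < N) f j)%R.
  have Hu : (kmat g M N *m u = 0)%R.
  { apply/matrixP => j k; rewrite !mxE.
    under eq_bigr => i' _ do rewrite /kmat /u !mxE.
    by rewrite (big_sum_psum (fun i => Kern g M (grid N j) (grid N i) * f i)) Hf. }
  have : u = 0%R by rewrite -(mulKmx Hinv u) Hu mulmx0.
  by move/(congr1 (fun v : 'cV[R]_N => v (Ordinal Hi) ord0)); rewrite !mxE.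
Qed.

Section Spectrum.

Variables (g : R -> R) (M : R) (N h : nat).
Hypothesis HG_nonneg : forall k, snd (Gcoef g M k) = 0 /\ 0 <= fst (Gcoef g M k).
Hypothesis HG_sum : zsummable (fun k => fst (Gcoef g M k)).
Hypothesis HK_rkhs : forall x x', RtoC (Kern g M x x') =
  zsumC (fun k => Cmult (Gcoef g M k) (Cmult (phi k x) (Cconj (phi k x')))).
Hypothesis HNh : N = (2 * h)%N.
Hypothesis HN : (0 < N)%coq_nat.
Hypothesis Hinv : kmat g M N \in unitmx.

Lemma G1_pos l : (l < N)%coq_nat -> 0 < G1 g M N l.
Proof.
  move=> Hl.
  have G1_nonneg : 0 <= G1 g M N l.
  { rewrite (G1_class_coef g M HG_nonneg HG_sum N HN l Hl).
    apply: zsumR_nonneg; [exact: class_coef_nonneg | exact: zsummable_class_coef]. }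
  case: (Rle_lt_or_eq_dec _ _ G1_nonneg) => // H0; exfalso.
  have Heigen j := Kern_grid_eigen g M HG_nonneg HG_sum HK_rkhs N HN h HNh l j Hl.
  have HN' : (0 < N)%N by apply/ltP.
  have Hc : cos (IZR (Z.of_nat l) * grid N 0) = 0.
  { apply: (kmat_psum_eq0 g M N (fun i => cos (IZR (Z.of_nat l) * grid N i))) => // j _.
    by rewrite (proj1 (Heigen j)) -H0; ring. }
  have Hs : sin (IZR (Z.of_nat l) * grid N 0) = 0.
  { apply: (kmat_psum_eq0 g M N (fun i => sin (IZR (Z.of_nat l) * grid N i))) => // j _.
    by rewrite (proj2 (Heigen j)) -H0; ring. }
  by have := sin2_cos2 (IZR (Z.of_nat l) * grid N 0); rewrite Hc Hs /Rsqr; lra.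
Qed.

Lemma TKN_psi l x : (l < N)%coq_nat ->
  TKN g M N (psi g M N l) x = Cmult (RtoC (G1 g M N l)) (psi g M N l x).
Proof.
  move=> Hl. rewrite /TKN (big_Cplus_psum (fun i =>
    Cmult (RtoC (Kern g M x (grid N i))) (psi g M N l (grid N i)))).
  have [Hre Him] := Kern_grid_sum_psi g M HG_nonneg HG_sum HK_rkhs N HN h HNh l x Hl.
  rewrite (psum_ext _ (fun i => Kern g M x (grid N i) * fst (psi g M N l (grid N i))));
    last by move=> i; rewrite /Cmult /RtoC /=; ring.
  rewrite (psum_ext (fun i => snd _) (fun i => Kern g M x (grid N i) * snd (psi g M N l (grid N i))));
    last by move=> i; rewrite /Cmult /RtoC /=; ring.
  have HNR : INR N <> 0 by apply: not_0_INR; lia.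
  by apply: injective_projections; rewrite /Cmult /RtoC; cbn [fst snd]; rewrite ?Hre ?Him; field.
Qed.

End Spectrum.

Theorem lemma8 (g : R -> R) (M : R) (N : nat)
  (Hg_even : forall x, g (- x) = g x)
  (HM : 0 < M)
  (Hg_int : ex_RInt (fun t => g (M * t)) (- PI) PI)
  (Hpd : pos_def (Kern g M))
  (HG_nonneg : forall k, snd (Gcoef g M k) = 0 /\ 0 <= fst (Gcoef g M k))
  (HG_sum : zsummable (fun k => fst (Gcoef g M k)))
  (HK_rkhs : forall x x', RtoC (Kern g M x x') =
       zsumC (fun k => Cmult (Gcoef g M k) (Cmult (phi k x) (Cconj (phi k x')))))
  (HN_even : Nat.Even N)
  (Hinv : kmat g M N \in unitmx) :
  forall l : nat, (l < N)%nat ->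
    (forall x, TKN g M N (psi g M N l) x = Cmult (RtoC (G1 g M N l)) (psi g M N l x))
    /\ rkhs_norm g M (psi g M N l) = 1
    /\ L2norm (psi g M N l) = G2 g M N l / sqrt (G1 g M N l)
    /\ (forall k : nat, (k < N)%nat -> k <> l -> ip (psi g M N l) (psi g M N k) = RtoC 0).
Proof.
  move=> l /ltP Hl.
  have HN : (0 < N)%coq_nat by lia.
  have [h HNh] := HN_even.
  have Hpos := G1_pos g M N h HG_nonneg HG_sum HK_rkhs HNh HN Hinv l Hl.
  split; [|split; [|split]].
  - by move=> x; apply: (TKN_psi g M N h HG_nonneg HG_sum HK_rkhs HNh HN l x Hl).
  - exact: rkhs_norm_psi g M HG_nonneg HG_sum N HN l Hl Hpos.
  - exact: L2norm_psi g M HG_nonneg HG_sum N HN l Hl Hpos.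
  - by move=> k /ltP Hk Hkl; apply: (ip_psi_orthogonal g M HG_nonneg HG_sum N HN).
Qed.
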